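(* Assume the standing hypotheses (H), (L) and (g) below. Let $u\in W^{1,1}(0,T;X)$ and $x_0\in X$ with $x_0\in Z(g(0,u(0),u(0)-x_0))$, and let $\xi\in W^{1,1}(0,T;X)$ be a solution of the state-dependent sweeping process with input $u$ and initial condition $x_0$. Then $$|\dot\xi(t)|\le\frac1{1-\delta}\Big(\Big(1+\frac{\omega K_1}{c}\Big)|\dot u(t)|+\frac{K_1}{c}a(t)\Big)\quad\text{for a.e. }t\in(0,T).$$
   Context: $T>0$. $X$ is a real Hilbert space with inner product $\langle\cdot,\cdot\rangle$ and norm $|x|=\sqrt{\langle x,x\rangle}$; $W$ is a real Banach space with norm $|\cdot|_W$, dual $W'$ (norm $|\cdot|_{W'}$), duality pairing $\langle v,f\rangle_W$; $\mathcal L(X,W)$ bounded linear operators with operator norm. $G:X\times W\to[0,\infty)$ is locally Lipschitz and $Z(w):=\{x\in X: G(x,w)\le 1\}$; $\partial Z(w)$ its boundary, $\mathrm{dist}(x,S)=\inf_{s\in S}|x-s|$. Partial gradients: $\nabla_xG(x,w)\in X$ with $\langle\nabla_xG(x,w),y\rangle=\lim_{t\to0}\frac1t(G(x+ty,w)-G(x,w))$; $\nabla_wG(x,w)\in W'$ with $\langle v,\nabla_wG(x,w)\rangle_W=\lim_{t\to0}\frac1t(G(x,w+tv)-G(x,w))$. (H): $\nabla_xG(x,w)$ exists for all $(x,w)$; there are positive constants $\lambda,c,L$ and functions $\mu_1:W\times[0,\infty)\to[0,\infty)$, $\mu_2:[0,\infty)\to[0,\infty)$ with $\mu_1(w,0)=\mu_2(0)=0$,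 $\lim_{s\to\infty}\mu_1(w,s)=\lim_{s\to\infty}\mu_2(s)=\infty$ for every $w$, such that for all $x,y,z\in X$, $w,w'\in W$: (i) $G(x,w)=1\Rightarrow|\nabla_xG(x,w)|\ge c$; (ii) $|\nabla_xG(x,w)-\nabla_xG(y,w)|\le\mu_1(w,|x-y|)$ if $x,y\in Z(w)$; (iii) $\langle\nabla_xG(x,w)-\nabla_xG(z,w),x-z\rangle\ge-\lambda|x-z|^2$ if $x\in\partial Z(w)$, $z\in Z(w)$; (iv) $|G(x,w)-G(x,w')|\le L|w-w'|_W$; (v) for $\rho>0$, $\mathrm{dist}(x,Z(w))\ge\rho\Rightarrow G(x,w)-1\ge\mu_2(\rho)$. Set $r:=c/\lambda$. (L): $\nabla_xG,\nabla_wG$ exist on $X\times W$; positive constants $K_0,K_1,C_0,C_1$ with $|\nabla_xG|\le K_0$, $|\nabla_wG|_{W'}\le K_1$, $|\nabla_xG(x,w)-\nabla_xG(x',w')|\le C_0(|x-x'|+|w-w'|_W)$, $|\nabla_wG(x,w)-\nabla_wG(x',w')|_{W'}\le C_1(|x-x'|+|w-w'|_W)$. (g): $g:[0,T]\times X\times X\to W$ continuous with partial derivatives $\partial_tg,\partial_ug,\partial_\xi g$, and $a,b\in L^1(0,T)$, constants $\gamma,\omega,C_\xi,C_u>0$ such that for all $u,v,\xi,\eta\in X$, a.e. $t$: $|\partial_\xi g(t,u,\xi)|_{\mathcal L(X,W)}\le\gamma$, $|\partial_ug(t,u,\xi)|_{\mathcal L(X,W)}\le\omega$, $|\partial_tg(t,u,\xi)|_W\le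 a(t)$, $|\partial_\xi g(t,u,\xi)-\partial_\xi g(t,v,\eta)|_{\mathcal L(X,W)}\le C_\xi(|u-v|+|\xi-\eta|)$, $|\partial_ug(t,u,\xi)-\partial_ug(t,v,\eta)|_{\mathcal L(X,W)}\le C_u(|u-v|+|\xi-\eta|)$, $|\partial_tg(t,u,\xi)-\partial_tg(t,v,\eta)|_W\le b(t)(|u-v|+|\xi-\eta|)$; and $\delta:=K_1\gamma/c<1$. State-dependent sweeping process with input $u$ and initial condition $x_0$: $\xi\in W^{1,1}(0,T;X)$ such that, with $x:=u-\xi$: $x(t)\in Z(g(t,u(t),\xi(t)))$ for all $t\in[0,T]$; $\langle x(t)-z,\dot\xi(t)\rangle+\frac{|\dot\xi(t)|}{2r}|x(t)-z|^2\ge0$ for all $z\in Z(g(t,u(t),\xi(t)))$, a.e. $t$; $x(0)=x_0$. *)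

From HB Require Import structures.
From mathcomp Require Import all_boot all_order all_algebra.
From mathcomp Require Import all_classical all_reals all_analysis.
Set Implicit Arguments. Unset Strict Implicit. Unset Printing Implicit Defensive.
Import Order.TTheory GRing.Theory Num.Theory.
Import numFieldNormedType.Exports.
Local Open Scope classical_set_scope.
Local Open Scope ring_scope.

Section Defs.
Variable R : realType.

(* ip is an inner product on X inducing the norm of X (X is then a real
   Hilbert space when X is a completeNormedModType). *)
Definition inner_product (X : normedModType R) (ip : X -> X -> R) : Prop :=
  [/\ (forall x y, ip x y = ip y x),
      (forall (a : R) x y z, ip (a *: x + y) z = a * ip x z + ip y z)
    & (forall x, `|x| = Num.sqrt (ip x x))].

Definition bdry (T : topologicalType) (A : set T) : set T :=
  closure A `\` interior A.

(* dist(x,S) = inf_{s in S} |x - s|, in the extended reals (+oo if S = set0) *)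
Definition dist (X : normedModType R) (x : X) (S : set X) : \bar R :=
  ereal_inf [set (`|x - s|)%:E | s in S].

Definition Zset (X W : normedModType R) (G : X -> W -> R) (w : W) : set X :=
  [set x | G x w <= 1].

Definition locally_lipschitz (X W : normedModType R) (G : X -> W -> R) : Prop :=
  forall (x0 : X) (w0 : W), exists2 rho : R, 0 < rho & exists Lc : R,
    forall x x' w w', `|x - x0| < rho -> `|x' - x0| < rho ->
      `|w - w0| < rho -> `|w' - w0| < rho ->
      `|G x w - G x' w'| <= Lc * (`|x - x'| + `|w - w'|).

Definition abs_cont (V : normedModType R) (a b : R) (f : R -> V) : Prop :=
  forall e : R, 0 < e -> exists2 d : R, 0 < d &
    forall (n : nat) (s t : 'I_n -> R),
      (forall i, a <= s i /\ s i <= t i /\ t i <= b) ->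
      (forall i j, i != j -> t i <= s j \/ t j <= s i) ->
      \sum_(i < n) (t i - s i) < d ->
      \sum_(i < n) `|f (t i) - f (s i)| < e.

Definition W11 (V : normedModType R) (T : R) (f : R -> V) : Prop :=
  [/\ abs_cont 0 T f,
      (\forall t \ae (@lebesgue_measure R), `]0, T[%classic t -> derivable f (t : R) 1)
    & (@lebesgue_measure R).-integrable `]0, T[%classic
         (fun t => (`|derive1 f t|)%:E)].

(* Solution of the state-dependent sweeping process with input u and
   initial condition x0 (with x := u - xi). *)
Definition sweeping_solution (X W : normedModType R) (ip : X -> X -> R)
    (G : X -> W -> R) (g : R -> X -> X -> W) (r T : R) (u : R -> X) (x0 : X)
    (xi : R -> X) : Prop :=
  [/\ W11 T xi,
      (forall t, 0 <= t <= T -> Zset G (g t (u t) (xi t)) (u t - xi t)),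
      (\forall t \ae (@lebesgue_measure R), `]0, T[%classic t ->
          forall z, Zset G (g t (u t) (xi t)) z ->
            0 <= ip (u t - xi t - z) (derive1 xi t)
                 + `|derive1 xi t| / (2 * r) * `|u t - xi t - z| ^+ 2)
    & u 0 - xi 0 = x0].

End Defs.

From HB Require Import structures.
From mathcomp Require Import all_boot all_order all_algebra.
From mathcomp Require Import all_classical all_reals all_analysis.
From mathcomp Require Import ring lra.
Import Order.TTheory GRing.Theory Num.Theory.
Import numFieldNormedType.Exports.
Local Open Scope classical_set_scope.
Local Open Scope ring_scope.

(* Fix a time t at which u and xi are differentiable and v := xi'(t) <> 0, and
   put x := u(t) - xi(t), w := g(t, u(t), xi(t)), n := grad_x G(x, w).
   Testing the sweeping inequality with z = x + k y, k -> 0+, shows that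
   <y, v> <= 0 for every direction y along which the constraint G(., w) <= 1
   persists; hence G(x, w) = 1, so |n| >= c, and v is an outer normal:
   |n| |v| <= <n, v>.
   On the other hand G <= 1 at every earlier time s, while G = 1 at t; the mean
   value theorem in x and in w bounds <n, x(s) - x(t)> from above, and dividing
   by t - s and letting s -> t gives
   <n, v - u'(t)> <= K1 (omega |u'(t)| + gamma |v| + |g_t|).
   The bounds omega, gamma on g_u, g_xi hold only at a.e. time, so s runs along
   a sequence of good times increasing to t.  The two inequalities together,
   with gamma K1 / c < 1, give the estimate. *)

Section InnerProduct.
Context {R : realType} {X : normedModType R} {ip : X -> X -> R}.
Hypothesis ipP : inner_product ip.

Lemma ipC a b : ip a b = ip b a.
Proof. by case: ipP. Qed.

Lemma ipZDl k a b z : ip (k *: a + b) z = k * ip a z + ip b z.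
Proof. by case: ipP. Qed.

Lemma ipDl a b z : ip (a + b) z = ip a z + ip b z.
Proof. by rewrite -{1}[a]scale1r ipZDl mul1r. Qed.

Lemma ip0l z : ip 0 z = 0.
Proof. by apply: (addrI (ip 0 z)); rewrite -ipDl !addr0. Qed.

Lemma ipZl k a z : ip (k *: a) z = k * ip a z.
Proof. by rewrite -[k *: a]addr0 ipZDl ip0l addr0. Qed.

Lemma ipNl a z : ip (- a) z = - ip a z.
Proof. by rewrite -scaleN1r ipZl mulN1r. Qed.

Lemma ipBl a b z : ip (a - b) z = ip a z - ip b z.
Proof. by rewrite ipDl ipNl. Qed.

Lemma ipDr a b z : ip z (a + b) = ip z a + ip z b.
Proof. by rewrite ipC ipDl ipC (ipC b). Qed.

Lemma ipZr k a z : ip z (k *: a) = k * ip z a.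
Proof. by rewrite ipC ipZl ipC. Qed.

Lemma ipNr a z : ip z (- a) = - ip z a.
Proof. by rewrite ipC ipNl ipC. Qed.

Lemma ipBr a b z : ip z (a - b) = ip z a - ip z b.
Proof. by rewrite ipDr ipNr. Qed.

Lemma ipvv a : ip a a = `|a| ^+ 2.
Proof.
have [_ _ ->] := ipP; have [ip_ge0|ip_lt0] := leP 0 (ip a a).
  by rewrite sqr_sqrtr.
have : `|a| = 0 by have [_ _ ->] := ipP; rewrite ler0_sqrtr ?ltW.
by move/normr0_eq0 => a0; move: ip_lt0; rewrite a0 ip0l ltxx.
Qed.

Lemma ip_le_norm a b : ip a b <= `|a| * `|b|.
Proof.
have : `|a + b| ^+ 2 <= (`|a| + `|b|) ^+ 2.
  by rewrite lerXn2r ?nnegrE ?addr_ge0 // ler_normD.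
by rewrite -ipvv ipDl !ipDr (ipC b a) !ipvv; lra.
Qed.

Lemma normr_ip_le a b : `|ip a b| <= `|a| * `|b|.
Proof.
rewrite ler_norml ip_le_norm andbT.
by have := ip_le_norm a (- b); rewrite ipNr normrN; lra.
Qed.

End InnerProduct.

Section DifferenceQuotients.
Context {R : realType}.

Lemma derive1_quotient_cvg {V : normedModType R} {f : R -> V} {t : R} :
  derivable f t 1 -> (fun h => h^-1 *: (f (t + h) - f t)) @ 0^' --> derive1 f t.
Proof.
have -> : (fun h => h^-1 *: (f (t + h) - f t)) =
          (fun h => h^-1 *: ((f \o shift t) (h *: 1) - f t)).
  by apply/funext => h /=; rewrite /shift /= [h%:A]mulr1 (addrC h t).
by rewrite derive1E; apply.
Qed.

Lemma quotient_seq_cvg {V : normedModType R} {f : R -> V} {t : R} {d : V}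
    {hs : nat -> R} :
  (fun h => h^-1 *: (f (t + h) - f t)) @ 0^' --> d ->
  hs @ \oo --> (0 : R) -> (forall k, hs k != 0) ->
  ((hs k)^-1 *: (f (t + hs k) - f t)) @[k --> \oo] --> d.
Proof.
move=> fd hs0 hs_neq0; have hs0' : hs @ \oo --> (0 : R)^'.
  move=> A A0; have : \forall k \near \oo, hs k != 0 -> A (hs k) by exact: hs0 _ A0.
  by apply: filterS => k; apply.
exact: (cvg_comp _ _ hs0' fd).
Qed.

Lemma segment_mvt {V : normedModType R} {f D : V -> R} (x : V) {p : V} :
  (forall z, (fun h => (f (z + h *: p) - f z) / h) @ 0^' --> D z) ->
  exists2 th : R, 0 <= th <= 1 & f (x + p) - f x = D (x + th *: p).
Proof.
move=> fD; pose phi th := f (x + th *: p).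
have phiD (th : R) : is_derive th (1 : R) phi (D (x + th *: p)).
  have q : (fun h => h^-1 *: ((phi \o shift th) (h *: 1) - phi th)) @ 0^'
             --> D (x + th *: p).
    apply: cvg_trans _ (fD (x + th *: p)); apply: near_eq_cvg; apply: nearW => h.
    by rewrite /phi /shift /= [h%:A]mulr1 scalerDl (addrC (h *: p)) addrA mulrC.
  by apply: DeriveDef; [apply/cvg_ex; exists (D (x + th *: p)) | exact: cvg_lim].
have [th th01 phi10] := MVT_segment ler01 (fun th _ => phiD th)
  (derivable_within_continuous (fun th _ => (phiD th).(ex_derive))).
exists th; first by move: th01; rewrite in_itv.
by move: phi10; rewrite /phi scale1r scale0r addr0 subr0 mulr1.
Qed.

End DifferenceQuotients.

Section BoundedLinear.
Context {R : realType} {W : normedModType R} {ell : W -> R} {K : R}.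
Hypothesis ellZD : forall k a b, ell (k *: a + b) = k * ell a + ell b.
Hypothesis ell_le : forall a, `|ell a| <= K * `|a|.
Hypothesis K_ge0 : 0 <= K.

Lemma ell0 : ell 0 = 0.
Proof.
by have := ellZD 1 0 0; rewrite scale1r addr0 mul1r; lra.
Qed.

Lemma ellD a b : ell (a + b) = ell a + ell b.
Proof. by rewrite -{1}[a]scale1r ellZD mul1r. Qed.

Lemma ellZ k a : ell (k *: a) = k * ell a.
Proof. by rewrite -[k *: a]addr0 ellZD ell0 addr0. Qed.

Lemma ellB a b : ell (a - b) = ell a - ell b.
Proof. by rewrite -scaleN1r ellD ellZ mulN1r. Qed.

Lemma ell_cvg {T : Type} {F : set_system T} {FF : Filter F} {q : T -> W} {l : W} :
  q @ F --> l -> ell (q x) @[x --> F] --> ell l.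
Proof.
move=> /cvgrPdist_lt ql; apply/cvgrPdist_lt => e e_gt0.
have K1_gt0 : 0 < K + 1 by have := K_ge0; lra.
have e'_gt0 : 0 < e / (K + 1) by rewrite divr_gt0.
apply: filterS (ql _ e'_gt0) => y qy; rewrite -ellB (le_lt_trans (ell_le _)) //.
have : (K + 1) * `|l - q y| < e by rewrite -ltr_pdivlMl //; lra.
by have := normr_ge0 (l - q y); nra.
Qed.

Lemma ell_mvt {V : normedModType R} {phi D : V -> W} (x : V) {p : V} {M : R} :
  (forall z, (fun h => h^-1 *: (phi (z + h *: p) - phi z)) @ 0^' --> D z) ->
  (forall z, `|D z| <= M) ->
  `|ell (phi (x + p) - phi x)| <= K * M.
Proof.
move=> phiD D_le.
have ell_phiD z : (fun h => (ell (phi (z + h *: p)) - ell (phi z)) / h) @ 0^'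
                    --> ell (D z).
  apply: cvg_trans _ (ell_cvg (phiD z)); apply: near_eq_cvg; apply: nearW => h.
  by rewrite /= ellZ ellB mulrC.
rewrite ellB; have [th _ ->] := segment_mvt x ell_phiD.
by rewrite (le_trans (ell_le _)) // ler_wpM2l.
Qed.

End BoundedLinear.

Lemma lipschitz_grad_lower_bound {R : realType} {X : normedModType R}
    {ip : X -> X -> R} {f : X -> R} {gf : X -> X} {C : R} {x p : X} :
  inner_product ip ->
  (forall z, (fun h => (f (z + h *: p) - f z) / h) @ 0^' --> ip (gf z) p) ->
  (forall z, `|gf z - gf x| <= C * `|z - x|) -> 0 <= C ->
  ip (gf x) p - C * `|p| ^+ 2 <= f (x + p) - f x.
Proof.
move=> ipP fD gf_lip C_ge0; have [th /andP [th_ge0 th_le1] ->] := segment_mvt x fD.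
have : `|ip (gf (x + th *: p) - gf x) p| <= C * `|p| ^+ 2.
  apply: le_trans (normr_ip_le ipP _ _) _.
  rewrite expr2 mulrA ler_wpM2r //; apply: le_trans (gf_lip _) _.
  by rewrite [x + _]addrC addrK normrZ ger0_norm // ler_wpM2l // ler_piMl.
by rewrite (ipBl ipP) ler_norml => /andP [+ _]; lra.
Qed.

Section LevelCrossing.
Context {R : realType} {X W : normedModType R} {ip : X -> X -> R}.
Context {G : X -> W -> R} {gradx : X -> W -> X} {gradw : X -> W -> W -> R}.
Context {C0 K1 : R}.
Hypothesis ipP : inner_product ip.
Hypothesis G_dx : forall x w y,
  (fun h : R => (G (x + h *: y) w - G x w) / h) @ 0^' --> ip (gradx x w) y.
Hypothesis G_dw : forall x w v,
  (fun h : R => (G x (w + h *: v) - G x w) / h) @ 0^' --> gradw x w v.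
Hypothesis gradx_lip : forall x x' w, `|gradx x w - gradx x' w| <= C0 * `|x - x'|.
Hypothesis C0_ge0 : 0 <= C0.
Hypothesis gradw_lin : forall x w k v v',
  gradw x w (k *: v + v') = k * gradw x w v + gradw x w v'.
Hypothesis gradw_le : forall x w v, `|gradw x w v| <= K1 * `|v|.
Hypothesis K1_ge0 : 0 <= K1.

Lemma level_crossing {x0 : X} {w0 : W} {x1 : X} {w1 : W} :
  G x0 w0 = 1 -> G x1 w1 <= 1 ->
  exists w, ip (gradx x0 w0) (x1 - x0) - C0 * `|x1 - x0| ^+ 2
            <= - gradw x1 w (w1 - w0).
Proof.
move=> G0 G1.
have lower := lipschitz_grad_lower_bound (f := G^~ w0) ipP
  (fun z => G_dx z w0 (x1 - x0)) (fun z => gradx_lip z x0 w0) C0_ge0.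
have [th _ mvt] := segment_mvt (f := G x1) w0 (fun w => G_dw x1 w (w1 - w0)).
exists (w0 + th *: (w1 - w0)); move: lower mvt; rewrite /= ![_ + (_ - _)]addrC !subrK.
by rewrite G0; lra.
Qed.

Lemma state_increment_le {gs : X -> X -> W} {gu gxi : X -> X -> X -> W}
    {omega gamma : R} {u0 xi0 u1 xi1 : X} {w0 : W} :
  (forall uu z y, (fun h : R => h^-1 *: (gs (uu + h *: y) z - gs uu z)) @ 0^'
                    --> gu uu z y) ->
  (forall uu z y, (fun h : R => h^-1 *: (gs uu (z + h *: y) - gs uu z)) @ 0^'
                    --> gxi uu z y) ->
  (forall uu z y, `|gu uu z y| <= omega * `|y|) ->
  (forall uu z y, `|gxi uu z y| <= gamma * `|y|) ->
  G (u0 - xi0) w0 = 1 -> G (u1 - xi1) (gs u1 xi1) <= 1 ->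
  ip (gradx (u0 - xi0) w0) ((u1 - xi1) - (u0 - xi0))
    - C0 * `|(u1 - xi1) - (u0 - xi0)| ^+ 2
  <= K1 * (omega * `|u1 - u0| + gamma * `|xi1 - xi0| + `|gs u0 xi0 - w0|).
Proof.
move=> gs_du gs_dxi gu_le gxi_le G0 G1.
have [w cross] := level_crossing G0 G1; set ell := gradw (u1 - xi1) w in cross.
have ell_lin k a b : ell (k *: a + b) = k * ell a + ell b by exact: gradw_lin.
have ell_le a : `|ell a| <= K1 * `|a| by exact: gradw_le.
have du : `|ell (gs u1 xi1 - gs u0 xi1)| <= K1 * (omega * `|u1 - u0|).
  have := ell_mvt ell_lin ell_le K1_ge0 (phi := gs^~ xi1) u0
    (fun z => gs_du z xi1 (u1 - u0)) (fun z => gu_le z xi1 (u1 - u0)).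
  by rewrite [u0 + _]addrC subrK.
have dxi : `|ell (gs u0 xi1 - gs u0 xi0)| <= K1 * (gamma * `|xi1 - xi0|).
  have := ell_mvt ell_lin ell_le K1_ge0 (phi := gs u0) xi0
    (fun z => gs_dxi u0 z (xi1 - xi0)) (fun z => gxi_le u0 z (xi1 - xi0)).
  by rewrite [xi0 + _]addrC subrK.
have dt := ell_le (gs u0 xi0 - w0).
have split_w : gs u1 xi1 - w0 =
  (gs u1 xi1 - gs u0 xi1) + (gs u0 xi1 - gs u0 xi0) + (gs u0 xi0 - w0).
  by rewrite !addrA !subrK.
move: cross du dxi dt; rewrite split_w !(ellD ell_lin) !ler_norml.
by move=> ? /andP [? _] /andP [? _] /andP [? _]; lra.
Qed.

End LevelCrossing.

Lemma left_quotient_estimate {R : realType} {X W : normedModType R}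
    {ip : X -> X -> R} {u xi : R -> X} {gg : R -> W} {n u' xi' : X} {g' : W}
    {C0 K1 omega gamma t : R} {hs : nat -> R} :
  inner_product ip ->
  (fun h => h^-1 *: (u (t + h) - u t)) @ 0^' --> u' ->
  (fun h => h^-1 *: (xi (t + h) - xi t)) @ 0^' --> xi' ->
  (fun h => h^-1 *: (gg (t + h) - gg t)) @ 0^' --> g' ->
  hs @ \oo --> (0 : R) -> (forall k, hs k < 0) ->
  (forall k, ip n ((u (t + hs k) - xi (t + hs k)) - (u t - xi t))
       - C0 * `|(u (t + hs k) - xi (t + hs k)) - (u t - xi t)| ^+ 2
     <= K1 * (omega * `|u (t + hs k) - u t| + gamma * `|xi (t + hs k) - xi t|
              + `|gg (t + hs k) - gg t|)) ->
  - ip n (u' - xi') <= K1 * (omega * `|u'| + gamma * `|xi'| + `|g'|).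
Proof.
move=> ipP du dxi dg hs0 hs_lt0 est.
have hs_neq0 k : hs k != 0 by rewrite lt_eqF.
pose q (V : normedModType R) (f : R -> V) k : V := (hs k)^-1 *: (f (t + hs k) - f t).
have qu := quotient_seq_cvg du hs0 hs_neq0.
have qxi := quotient_seq_cvg dxi hs0 hs_neq0.
have qg := quotient_seq_cvg dg hs0 hs_neq0.
have qx : (q _ u k - q _ xi k) @[k --> \oo] --> u' - xi' by exact: cvgB.
have ip_n_lin k a b : ip n (k *: a + b) = k * ip n a + ip n b.
  by rewrite (ipDr ipP) (ipZr ipP).
have lhs : - ip n (q _ u k - q _ xi k) @[k --> \oo] --> - ip n (u' - xi').
  apply: cvgN; apply: (ell_cvg ip_n_lin (normr_ip_le ipP n) (normr_ge0 n)).
  exact: qx.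
have rhs : K1 * (omega * `|q _ u k| + gamma * `|q _ xi k| + `|q _ gg k|)
             - C0 * hs k * `|q _ u k - q _ xi k| ^+ 2 @[k --> \oo]
           --> K1 * (omega * `|u'| + gamma * `|xi'| + `|g'|) - C0 * 0 * `|u' - xi'| ^+ 2.
  apply: cvgB; first apply: cvgMl_tmp; first apply: cvgD; first apply: cvgD.
  - exact: cvgMl_tmp (cvg_norm qu).
  - exact: cvgMl_tmp (cvg_norm qxi).
  - exact: cvg_norm qg.
  by apply: cvgM; [exact: cvgMl_tmp hs0 | exact: cvgM (cvg_norm qx) (cvg_norm qx)].
rewrite mulr0 mul0r subr0 in rhs; apply: (ler_cvg_to lhs rhs); apply: nearW => k.
have incr (V : normedModType R) (f : R -> V) : f (t + hs k) - f t = hs k *: q _ f k.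
  by rewrite scalerA mulfV ?scale1r.
have incr_x : (u (t + hs k) - xi (t + hs k)) - (u t - xi t)
    = hs k *: (q _ u k - q _ xi k).
  rewrite scalerBr -(incr _ u) -(incr _ xi) !opprB.
  by rewrite addrACA [RHS]addrACA (addrC (- u t)).
have := est k; rewrite incr_x !incr !(normrZ (hs k)) (ipZr ipP) ltr0_norm //.
rewrite exprMn sqrrN; have mh_gt0 : 0 < - hs k by rewrite oppr_gt0.
move: mh_gt0; set h := hs k; set P := ip n _; set N := `|_ - _| => mh_gt0 est_k.
by rewrite -(ler_pM2l mh_gt0); nra.
Qed.

Lemma ae_left_dense {R : realType} {P : R -> Prop} {T t d : R} :
  (\forall s \ae (@lebesgue_measure R), `]0, T[%classic s -> P s) ->
  0 < t -> t <= T -> 0 < d -> exists s, [/\ t - d < s, s < t, 0 < s & P s].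
Proof.
move=> Pae t_gt0 tT d_gt0; apply: contrapT => noP.
set m := Num.max 0 (t - d).
have mt : m < t by rewrite gt_max t_gt0 /=; lra.
have itv_notP : [set` `]m, t[] `<=` ~` [set s | `]0, T[%classic s -> P s].
  move=> s /=; rewrite in_itv /= gt_max => /andP [/andP [s_gt0 s_gt] st] Ps.
  apply: noP; exists s; split => //; apply: Ps.
  by rewrite /= in_itv /= s_gt0 /=; lra.
have [A [mA A0 sA]] : (@lebesgue_measure R).-negligible
    (~` [set s | `]0, T[%classic s -> P s]) := Pae.
have : (@lebesgue_measure R [set` `]m, t[] <= 0)%E.
  rewrite -A0; apply: le_measure; rewrite ?inE //; exact: subset_trans sA.
by rewrite lebesgue_measure_itv /= lte_fin mt /= -EFinD lee_fin; lra.
Qed.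

Lemma ae_left_seq {R : realType} {P : R -> Prop} {T t : R} :
  (\forall s \ae (@lebesgue_measure R), `]0, T[%classic s -> P s) ->
  0 < t -> t <= T ->
  exists hs : nat -> R, [/\ hs @ \oo --> (0 : R), (forall k, hs k < 0),
     (forall k, 0 < t + hs k) & (forall k, P (t + hs k))].
Proof.
move=> Pae t_gt0 tT.
have near_t k : exists s, [/\ t - k.+1%:R^-1 < s, s < t, 0 < s & P s].
  by apply: (ae_left_dense Pae t_gt0 tT); rewrite invr_gt0.
have [f f_spec] := choice near_t.
exists (fun k => f k - t); split => [|k|k|k]; rewrite ?[t + _]addrC ?subrK.
- apply/cvgrPdist_lt => e e_gt0.
  apply: filterS (near_infty_natSinv_lt (PosNum e_gt0)) => k /= k_lt_e.
  have [ft ft' _ _] := f_spec k.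
  rewrite sub0r normrN ltr0_norm ?subr_lt0 // opprB; apply: (lt_trans _ k_lt_e).
  by rewrite ltrBlDr addrC -ltrBlDr.
- by case: (f_spec k) => _; rewrite subr_lt0.
- by case: (f_spec k).
- by case: (f_spec k).
Qed.

Section SweepingNormal.
Context {R : realType} {X : normedModType R} {ip : X -> X -> R}.
Context {f : X -> R} {n x v : X} {r : R}.
Hypothesis ipP : inner_product ip.
Hypothesis f_dx : forall y,
  (fun h : R => (f (x + h *: y) - f x) / h) @ 0^' --> ip n y.
Hypothesis fx_le1 : f x <= 1.
Hypothesis sweep : forall z, f z <= 1 ->
  0 <= ip (x - z) v + `|v| / (2 * r) * `|x - z| ^+ 2.

Lemma dderiv_line_cvg y : f (x + k *: y) @[k --> 0^'] --> f x.
Proof.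
have -> : f x = f x + 0 * ip n y by rewrite mul0r addr0.
apply: cvg_trans _ (cvgD (cvg_cst (f x)) (cvgM (cvg_within _) (f_dx y))).
apply: near_eq_cvg; near=> k.
have k_neq0 : k != 0 by near: k; exact: nbhs_dnbhs_neq.
change (f x + k * ((f (x + k *: y) - f x) / k) = f (x + k *: y)).
by rewrite mulrC divfK // addrC subrK.
Unshelve. all: by end_near.
Qed.

Lemma dderiv_descent y : ip n y < 0 -> \forall k \near 0^'+, f (x + k *: y) < f x.
Proof.
move=> ny_lt0; have q_lt0 := cvgr_lt _ (cvg_dnbhs_at_right (f_dx y)) _ ny_lt0.
near=> k.
have k_gt0 : 0 < k by near: k; exact: nbhs_right_gt.
have : (f (x + k *: y) - f x) / k < 0 by near: k; exact: q_lt0.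
by rewrite pmulr_llt0 ?invr_gt0 // subr_lt0.
Unshelve. all: by end_near.
Qed.

Lemma sweep_tangent y : (\forall k \near 0^'+, f (x + k *: y) <= 1) -> ip y v <= 0.
Proof.
move=> fy_le1; pose c := `|v| / (2 * r) * `|y| ^+ 2.
have ck_cvg : c * k @[k --> 0^'+] --> 0.
  rewrite -[X in _ --> X](mulr0 c); apply: cvgMl_tmp.
  by apply: cvg_at_right_filter; exact: cvg_id.
apply: (ler_cvg_to (cvg_cst (ip y v)) ck_cvg); near=> k.
have k_gt0 : 0 < k by near: k; exact: nbhs_right_gt.
have fk_le1 : f (x + k *: y) <= 1 by near: k; exact: fy_le1.
have := sweep _ fk_le1; rewrite opprD addNKr normrN normrZ (ipNl ipP) (ipZl ipP).
rewrite gtr0_norm // /c => sweep_k; rewrite -(ler_pM2l k_gt0); nra.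
Unshelve. all: by end_near.
Qed.

Lemma sweep_boundary : v != 0 -> f x = 1.
Proof.
move=> v_neq0; apply/eqP; rewrite eq_le fx_le1 leNgt; apply/negP => fx_lt1.
have : ip v v <= 0.
  apply: sweep_tangent.
  have near_x : \forall k \near 0^'+, f (x + k *: v) < 1.
    exact: cvgr_lt _ (cvg_dnbhs_at_right (dderiv_line_cvg v)) _ fx_lt1.
  by apply: filterS near_x => k; exact: ltW.
by rewrite (ipvv ipP) leNgt exprn_gt0 ?normr_gt0.
Qed.

Lemma sweep_normal_halfspace y : n != 0 -> ip n y <= 0 -> ip y v <= 0.
Proof.
move=> n_neq0 ny_le0.
have yv_le e : 0 < e -> ip y v <= e * ip n v.
  move=> e_gt0; have n_ye_lt0 : ip n (y - e *: n) < 0.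
    rewrite (ipBr ipP) (ipZr ipP) (ipvv ipP) subr_lt0 (le_lt_trans ny_le0) //.
    by rewrite mulr_gt0 ?exprn_gt0 ?normr_gt0.
  have : ip (y - e *: n) v <= 0.
    apply: sweep_tangent; apply: filterS (dderiv_descent _ n_ye_lt0) => k fk.
    exact: le_trans (ltW fk) fx_le1.
  by rewrite (ipBl ipP) (ipZl ipP) subr_le0.
have [nv_le0|nv_gt0] := leP (ip n v) 0.
  by apply: le_trans (yv_le 1 ltr01) _; rewrite mul1r.
apply/ler_addgt0Pr => e e_gt0; rewrite add0r.
by have := yv_le (e / ip n v); rewrite divr_gt0 // divfK ?gt_eqF //; apply.
Qed.

Lemma sweep_velocity_normal : n != 0 -> `|n| * `|v| <= ip n v.
Proof.
move=> n_neq0; have [->|v_neq0] := eqVneq v 0.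
  by rewrite normr0 mulr0 (ipC ipP) (ip0l ipP).
have v_gt0 : 0 < `|v| by rewrite normr_gt0.
have := sweep_normal_halfspace (`|n| *: v - `|v| *: n) n_neq0.
rewrite (ipBr ipP) !(ipZr ipP) (ipBl ipP) !(ipZl ipP) !(ipvv ipP).
have := ip_le_norm ipP n v; have := normr_ge0 n.
move: (ip n v) => P n_ge0 cauchy_schwarz halfspace.
have n_y_le0 : `|n| * P - `|v| * `|n| ^+ 2 <= 0 by nra.
by have := halfspace n_y_le0; nra.
Qed.

End SweepingNormal.

Lemma velocity_bound_of_normal_estimate {R : realFieldType}
    (N c K1 omega gamma a V U : R) :
  0 < c -> c <= N -> 0 <= K1 -> 0 <= omega -> 0 <= gamma -> 0 <= a ->
  0 <= U -> 0 <= V -> K1 * gamma / c < 1 ->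
  V * N <= N * U + K1 * (omega * U + gamma * V + a) ->
  V <= (1 - K1 * gamma / c)^-1 * ((1 + omega * K1 / c) * U + K1 / c * a).
Proof.
move=> c_gt0 cN K1_ge0 omega_ge0 gamma_ge0 a_ge0 U_ge0 V_ge0 delta_lt1 VN_le.
have E_ge0 : 0 <= K1 * (omega * U + gamma * V + a).
  by rewrite mulr_ge0 // !addr_ge0 // mulr_ge0.
have cVU_le : c * (V - U) <= K1 * (omega * U + gamma * V + a).
  have [UV|VU] := leP U V; last by rewrite (le_trans _ E_ge0) // pmulr_rle0 ?subr_le0 ?ltW.
  by rewrite (le_trans _ (_ : N * (V - U) <= _)) ?ler_wpM2r ?subr_ge0 //; lra.
have delta'_gt0 : 0 < 1 - K1 * gamma / c by lra.
rewrite -(ler_pM2l delta'_gt0) mulrA mulfV ?gt_eqF // mul1r -(ler_pM2l c_gt0).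
have -> : c * ((1 - K1 * gamma / c) * V) = c * V - K1 * gamma * V.
  by field; rewrite gt_eqF.
have -> : c * ((1 + omega * K1 / c) * U + K1 / c * a) = c * U + omega * K1 * U + K1 * a.
  by field; rewrite gt_eqF.
lra.
Qed.

Section VelocityBound.
Context {R : realType} {X W : normedModType R} {ip : X -> X -> R}.
Context {G : X -> W -> R} {gradx : X -> W -> X} {gradw : X -> W -> W -> R}.
Context {g gt : R -> X -> X -> W} {gu gxi : R -> X -> X -> X -> W}.
Context {c C0 K1 omega gamma T : R} {u xi : R -> X}.
Hypothesis ipP : inner_product ip.
Hypothesis G_dx : forall x w y,
  (fun h : R => (G (x + h *: y) w - G x w) / h) @ 0^' --> ip (gradx x w) y.
Hypothesis G_dw : forall x w v,
  (fun h : R => (G x (w + h *: v) - G x w) / h) @ 0^' --> gradw x w v.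
Hypothesis gradx_ge_c : forall x w, G x w = 1 -> c <= `|gradx x w|.
Hypothesis gradx_lip : forall x x' w, `|gradx x w - gradx x' w| <= C0 * `|x - x'|.
Hypothesis gradw_lin : forall x w k v v',
  gradw x w (k *: v + v') = k * gradw x w v + gradw x w v'.
Hypothesis gradw_le : forall x w v, `|gradw x w v| <= K1 * `|v|.
Hypothesis g_du : forall t uu z y, 0 <= t <= T ->
  (fun h : R => h^-1 *: (g t (uu + h *: y) z - g t uu z)) @ 0^' --> gu t uu z y.
Hypothesis g_dxi : forall t uu z y, 0 <= t <= T ->
  (fun h : R => h^-1 *: (g t uu (z + h *: y) - g t uu z)) @ 0^' --> gxi t uu z y.
Hypothesis g_bounds_ae : \forall s \ae (@lebesgue_measure R), `]0, T[%classic s ->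
  (forall uu z y, `|gu s uu z y| <= omega * `|y|) /\
  (forall uu z y, `|gxi s uu z y| <= gamma * `|y|).
Hypothesis Z_xi : forall t, 0 <= t <= T -> G (u t - xi t) (g t (u t) (xi t)) <= 1.
Hypotheses (c_gt0 : 0 < c) (C0_ge0 : 0 <= C0) (K1_ge0 : 0 <= K1).
Hypotheses (omega_ge0 : 0 <= omega) (gamma_ge0 : 0 <= gamma).
Hypothesis delta_lt1 : K1 * gamma / c < 1.

Lemma normal_derivative_estimate t : 0 < t <= T ->
  derivable u t 1 -> derivable xi t 1 ->
  (fun h => h^-1 *: (g (t + h) (u t) (xi t) - g t (u t) (xi t))) @ 0^'
    --> gt t (u t) (xi t) ->
  G (u t - xi t) (g t (u t) (xi t)) = 1 ->
  - ip (gradx (u t - xi t) (g t (u t) (xi t))) (derive1 u t - derive1 xi t)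
  <= K1 * (omega * `|derive1 u t| + gamma * `|derive1 xi t| + `|gt t (u t) (xi t)|).
Proof.
move=> /andP [t_gt0 t_leT] du dxi dg on_bd.
have [hs [hs0 hs_lt0 s_gt0 s_bounds]] := ae_left_seq g_bounds_ae t_gt0 t_leT.
apply: (left_quotient_estimate (u := u) (xi := xi) (t := t)
  (gg := fun s => g s (u t) (xi t)) (C0 := C0) ipP
  (derive1_quotient_cvg du) (derive1_quotient_cvg dxi) dg hs0 hs_lt0) => k.
have s_in : 0 <= t + hs k <= T by rewrite ltW //=; have := hs_lt0 k; lra.
have [gu_le gxi_le] := s_bounds k.
exact: (state_increment_le ipP G_dx G_dw gradx_lip C0_ge0 gradw_lin gradw_le
  K1_ge0 (fun uu z y => g_du _ uu z y s_in) (fun uu z y => g_dxi _ uu z y s_in)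
  gu_le gxi_le on_bd (Z_xi _ s_in)).
Qed.

Lemma sweep_velocity_le r t : 0 < t < T ->
  derivable u t 1 -> derivable xi t 1 ->
  (fun h => h^-1 *: (g (t + h) (u t) (xi t) - g t (u t) (xi t))) @ 0^'
    --> gt t (u t) (xi t) ->
  (forall z, Zset G (g t (u t) (xi t)) z ->
     0 <= ip (u t - xi t - z) (derive1 xi t)
          + `|derive1 xi t| / (2 * r) * `|u t - xi t - z| ^+ 2) ->
  `|derive1 xi t| <= (1 - K1 * gamma / c)^-1 *
     ((1 + omega * K1 / c) * `|derive1 u t| + K1 / c * `|gt t (u t) (xi t)|).
Proof.
move=> /andP [t_gt0 t_ltT] du dxi dg sweep_t.
have t_in : 0 <= t <= T by rewrite !ltW.
set v := derive1 xi t; set u' := derive1 u t; set e := `|gt t (u t) (xi t)|.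
have [N [cN VN_le]] : exists N, c <= N /\
    `|v| * N <= N * `|u'| + K1 * (omega * `|u'| + gamma * `|v| + e).
  have [v0|v_neq0] := eqVneq v 0.
    exists c; rewrite v0 normr0 mul0r lexx; split => //.
    rewrite mulr0 addr0 addr_ge0 ?mulr_ge0 ?addr_ge0 ?mulr_ge0 //.
      exact: ltW.
    exact: normr_ge0.
  set x := u t - xi t; set w := g t (u t) (xi t); set n := gradx x w.
  have Gx_le1 := Z_xi _ t_in.
  have on_bd := sweep_boundary (f := G^~ w) ipP (G_dx x w) Gx_le1 sweep_t v_neq0.
  have n_ge_c := gradx_ge_c _ _ on_bd.
  have n_neq0 : n != 0 by rewrite -normr_gt0 (lt_le_trans c_gt0).
  have aligned :=
    sweep_velocity_normal (f := G^~ w) ipP (G_dx x w) Gx_le1 sweep_t n_neq0.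
  have t_in' : 0 < t <= T by rewrite t_gt0 ltW.
  have key := normal_derivative_estimate t t_in' du dxi dg on_bd.
  have cauchy_schwarz := ip_le_norm ipP n u'.
  exists `|n|; split => //; move: aligned key cauchy_schwarz.
  by rewrite (ipBr ipP) -/x -/w -/n -/u' -/v -/e; lra.
by apply: (velocity_bound_of_normal_estimate N) => //; exact: normr_ge0.
Qed.

End VelocityBound.

Theorem lemma4p2
  (R : realType) (X : completeNormedModType R) (ip : X -> X -> R)
  (W : completeNormedModType R) (T : R)
  (G : X -> W -> R) (gradx : X -> W -> X) (gradw : X -> W -> W -> R)
  (lambda c L K0 K1 C0 C1 : R) (mu1 : W -> R -> R) (mu2 : R -> R)
  (g : R -> X -> X -> W) (gt : R -> X -> X -> W)
  (gu gxi : R -> X -> X -> X -> W) (a b : R -> R)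
  (gamma omega Cxi Cu : R)
  (u : R -> X) (x0 : X) (xi : R -> X) :
  (* standing data *)
  0 < T -> inner_product ip ->
  (forall x w, 0 <= G x w) -> locally_lipschitz G ->
  (* (H) *)
  (forall x w y, (fun h : R => (G (x + h *: y) w - G x w) / h) @ 0^' --> ip (gradx x w) y) ->
  0 < lambda -> 0 < c -> 0 < L ->
  (forall w s, 0 <= s -> 0 <= mu1 w s) -> (forall s, 0 <= s -> 0 <= mu2 s) ->
  (forall w, mu1 w 0 = 0) -> mu2 0 = 0 ->
  (forall w, mu1 w s @[s --> +oo] --> +oo) -> mu2 s @[s --> +oo] --> +oo ->
  (forall x w, G x w = 1 -> c <= `|gradx x w|) ->
  (forall w x y, Zset G w x -> Zset G w y ->
     `|gradx x w - gradx y w| <= mu1 w `|x - y|) ->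
  (forall w x z, bdry (Zset G w) x -> Zset G w z ->
     - lambda * `|x - z| ^+ 2 <= ip (gradx x w - gradx z w) (x - z)) ->
  (forall x w w', `|G x w - G x w'| <= L * `|w - w'|) ->
  (forall x w rho, 0 < rho -> (rho%:E <= dist x (Zset G w))%E ->
     mu2 rho <= G x w - 1) ->
  (* (L) *)
  (forall x w v, (fun h : R => (G x (w + h *: v) - G x w) / h) @ 0^' --> gradw x w v) ->
  (forall x w (k : R) v v', gradw x w (k *: v + v') = k * gradw x w v + gradw x w v') ->
  0 < K0 -> 0 < K1 -> 0 < C0 -> 0 < C1 ->
  (forall x w, `|gradx x w| <= K0) ->
  (forall x w v, `|gradw x w v| <= K1 * `|v|) ->
  (forall x x' w w', `|gradx x w - gradx x' w'| <= C0 * (`|x - x'| + `|w - w'|)) ->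
  (forall x x' w w' v,
     `|gradw x w v - gradw x' w' v| <= C1 * (`|x - x'| + `|w - w'|) * `|v|) ->
  (* (g) *)
  {within [set p : R * (X * X) | 0 <= p.1 <= T],
     continuous (fun p : R * (X * X) => g p.1 p.2.1 p.2.2)} ->
  (forall t uu z y, 0 <= t <= T ->
     (fun h : R => h^-1 *: (g t (uu + h *: y) z - g t uu z)) @ 0^' --> gu t uu z y) ->
  (forall t uu z y, 0 <= t <= T ->
     (fun h : R => h^-1 *: (g t uu (z + h *: y) - g t uu z)) @ 0^' --> gxi t uu z y) ->
  (forall t uu z (k : R) y y', 0 <= t <= T ->
     gu t uu z (k *: y + y') = k *: gu t uu z y + gu t uu z y') ->
  (forall t uu z (k : R) y y', 0 <= t <= T ->
     gxi t uu z (k *: y + y') = k *: gxi t uu z y + gxi t uu z y') ->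
  (@lebesgue_measure R).-integrable `]0, T[%classic (fun t => (a t)%:E) ->
  (@lebesgue_measure R).-integrable `]0, T[%classic (fun t => (b t)%:E) ->
  0 < gamma -> 0 < omega -> 0 < Cxi -> 0 < Cu ->
  (\forall t \ae (@lebesgue_measure R), `]0, T[%classic t ->
     forall uu v z eta,
       ((fun h : R => h^-1 *: (g ((t : R) + h) uu z - g t uu z)) @ 0^' --> gt t uu z) /\
       (forall y, `|gxi t uu z y| <= gamma * `|y|) /\
       (forall y, `|gu t uu z y| <= omega * `|y|) /\
       `|gt t uu z| <= a t /\
       (forall y, `|gxi t uu z y - gxi t v eta y|
                    <= Cxi * (`|uu - v| + `|z - eta|) * `|y|) /\
       (forall y, `|gu t uu z y - gu t v eta y|
                    <= Cu * (`|uu - v| + `|z - eta|) * `|y|) /\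
       `|gt t uu z - gt t v eta| <= b t * (`|uu - v| + `|z - eta|)) ->
  K1 * gamma / c < 1 ->
  (* the data of the lemma *)
  W11 T u ->
  Zset G (g 0 (u 0) (u 0 - x0)) x0 ->
  sweeping_solution ip G g (c / lambda) T u x0 xi ->
  \forall t \ae (@lebesgue_measure R), `]0, T[%classic t ->
     `|derive1 xi t| <= (1 - K1 * gamma / c)^-1 *
        ((1 + omega * K1 / c) * `|derive1 u t| + K1 / c * a t).
Proof.
(* Only first-order data enter: grad_x G, with |grad_x G| >= c on {G = 1} and
   Lipschitz constant C0 in x; grad_w G with bound K1; the partial derivatives
   of g with their a.e. bounds omega, gamma, a; and the a.e. differentiability
   of u and xi. *)
move=> _ ipP _ _ G_dx _ c_gt0 _ _ _ _ _ _ _ gradx_ge_c _ _ _ _ G_dw gradw_lin _ K1_gt0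
  C0_gt0 _ _ gradw_le gradx_lip _ _ g_du g_dxi _ _ _ _ gamma_gt0 omega_gt0 _ _ g_ae
  delta_lt1 [_ u_ae _] _ [[_ xi_ae _] Z_xi sweep_ae _].
have ae_filter := ae_filter_ringOfSetsType (@lebesgue_measure R).
have gradx_lip_x x x' w : `|gradx x w - gradx x' w| <= C0 * `|x - x'|.
  by have := gradx_lip x x' w w; rewrite subrr normr0 addr0.
have g_bounds_ae : \forall s \ae (@lebesgue_measure R), `]0, T[%classic s ->
    (forall uu z y, `|gu s uu z y| <= omega * `|y|) /\
    (forall uu z y, `|gxi s uu z y| <= gamma * `|y|).
  apply: filterS g_ae => s g_s s_in; split => uu z y.
  - by have [_ [_ [gu_le _]]] := g_s s_in uu uu z z; exact: gu_le.
  - by have [_ [gxi_le _]] := g_s s_in uu uu z z; exact: gxi_le.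
move: u_ae xi_ae sweep_ae; apply: filter_app3; apply: filterS g_ae.
move=> t g_t u_t xi_t sweep_t t_in.
have t_in' : 0 < t < T by move: t_in; rewrite /= in_itv.
have [dg [_ [_ [gt_le _]]]] := g_t t_in (u t) (u t) (xi t) (xi t).
apply: le_trans (sweep_velocity_le ipP G_dx G_dw gradx_ge_c gradx_lip_x gradw_lin
  gradw_le g_du g_dxi g_bounds_ae Z_xi c_gt0 (ltW C0_gt0) (ltW K1_gt0) (ltW omega_gt0)
  (ltW gamma_gt0) delta_lt1 _ _ t_in' (u_t t_in) (xi_t t_in) dg (sweep_t t_in)) _.
rewrite ler_wpM2l ?invr_ge0 ?subr_ge0 ?(ltW delta_lt1) // lerD2l.
by rewrite ler_wpM2l // divr_ge0 // ltW.
Qed.
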